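(* Let $F_i\colon \mathbb{R}^n \rightrightarrows \mathbb{R}^m$, $i=1,\ldots,p$, be nearly convex set-valued mappings and let $F=\bigcap_{i=1}^p F_i$, i.e. $F(x)=\bigcap_{i=1}^pF_i(x)$. Assume $$\bigcap_{i=1}^p \mathrm{ri}(\mathrm{gph}\, F_i)\neq\emptyset.$$ Then for any $\varepsilon \ge 0$, any $(\bar x, \bar y)\in \mathrm{gph}\, F$ and any $v\in\mathbb{R}^m$, $$D^*_\varepsilon F (\bar x, \bar y) (v)= \bigcup_{\substack{\varepsilon_1\geq 0,\ldots, \varepsilon_p\geq 0,\\ \varepsilon_1+\cdots+\varepsilon_p=\varepsilon}} \Big\{D^*_{\varepsilon_1} F_1 (\bar x, \bar y)(v_1)+\cdots+ D^*_{\varepsilon_p} F_p (\bar x, \bar y)(v_p) \;\Big|\; v_1+\cdots+v_p =v\Big\}.$$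
   Context: A set $D$ is nearly convex if there is a convex $E$ with $E\subset D\subset\overline{E}$. A set-valued mapping is nearly convex if its graph $\mathrm{gph}\,F=\{(x,y)\mid y\in F(x)\}$ is nearly convex. $\mathrm{ri}\,D=\{a\in D\mid\exists\delta>0,\ B(a;\delta)\cap\mathrm{aff}\,D\subset D\}$. For nonempty $\Omega$, $\bar z\in\Omega$, $\varepsilon\ge0$: $N_\varepsilon(\bar z;\Omega)=\{\xi\mid\langle\xi,z-\bar z\rangle\le\varepsilon\ \forall z\in\Omega\}$. The $\varepsilon$-coderivative at $(\bar x,\bar y)\in\mathrm{gph}\,F$ is $D^*_\varepsilon F(\bar x,\bar y)(v)=\{u\in\mathbb{R}^n\mid(u,-v)\in N_\varepsilon((\bar x,\bar y);\mathrm{gph}\,F)\}$. The union over the $v_i$ ranges over all $v_1,\dots,v_p\in\mathbb{R}^m$ summing to $v$; sums of sets are Minkowski sums. *)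

From HB Require Import structures.
From mathcomp Require Import all_boot all_order all_algebra.
From mathcomp Require Import classical_sets reals.
Set Implicit Arguments. Unset Strict Implicit. Unset Printing Implicit Defensive.
Import Order.TTheory GRing.Theory Num.Theory.
Local Open Scope ring_scope.
Local Open Scope classical_set_scope.

Section Defs.
Variable R : realType.

Definition dotv (d : nat) (u w : 'rV[R]_d) : R := \sum_(i < d) u ord0 i * w ord0 i.

Definition sqdist (d : nat) (a b : 'rV[R]_d) : R := dotv (a - b) (a - b).

Definition convex_set (d : nat) (E : set 'rV[R]_d) : Prop :=
  forall a b t, E a -> E b -> 0 <= t -> t <= 1 -> E (t *: a + (1 - t) *: b).

Definition eclosure (d : nat) (E : set 'rV[R]_d) : set 'rV[R]_d :=
  [set z | forall e : R, 0 < e -> exists w, E w /\ sqdist z w < e ^+ 2].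

Definition nearly_convex (d : nat) (D : set 'rV[R]_d) : Prop :=
  exists E : set 'rV[R]_d, convex_set E /\ E `<=` D /\ D `<=` eclosure E.

Definition aff (d : nat) (D : set 'rV[R]_d) : set 'rV[R]_d :=
  [set z | exists (k : nat) (w : 'I_k -> 'rV[R]_d) (c : 'I_k -> R),
     (forall i, D (w i)) /\ \sum_(i < k) c i = 1 /\ z = \sum_(i < k) c i *: w i].

Definition ri (d : nat) (D : set 'rV[R]_d) : set 'rV[R]_d :=
  [set a | D a /\ exists delta : R, 0 < delta /\
     forall z, sqdist z a < delta ^+ 2 -> aff D z -> D z].

Definition eps_normal (d : nat) (eps : R) (zbar : 'rV[R]_d) (Om : set 'rV[R]_d)
  : set 'rV[R]_d :=
  [set xi | forall z, Om z -> dotv xi (z - zbar) <= eps].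

Definition gph (n m : nat) (F : 'rV[R]_n -> set 'rV[R]_m) : set 'rV[R]_(n + m) :=
  [set z | F (lsubmx z) (rsubmx z)].

Definition nearly_convex_map (n m : nat) (F : 'rV[R]_n -> set 'rV[R]_m) : Prop :=
  nearly_convex (gph F).

Definition eps_coderiv (n m : nat) (eps : R) (F : 'rV[R]_n -> set 'rV[R]_m)
  (xb : 'rV[R]_n) (yb : 'rV[R]_m) (v : 'rV[R]_m) : set 'rV[R]_n :=
  [set u | eps_normal eps (row_mx xb yb) (gph F) (row_mx u (- v))].

Definition map_cap (p n m : nat) (F : 'I_p -> 'rV[R]_n -> set 'rV[R]_m)
  : 'rV[R]_n -> set 'rV[R]_m :=
  fun x => [set y | forall i, F i x y].

End Defs.

(* The inclusion from right to left is the sum of the eps_i-normal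
   inequalities.  Conversely, let xi be eps-normal at zb to the intersection of
   the graphs D_i, and pick convex E_i with E_i <= D_i <= cl E_i.  The convex
   set of all ((c_i - x)_i, t) with c_i in E_i and t < <xi, x - zb> - eps avoids
   the origin of (R^d)^p x R, so some ((eta_i)_i, lam) separates it properly
   from the origin.  The relative-interior condition forbids lam = 0, and then
   the xi_i := eta_i / lam sum to xi.  The bounds sup_{c in E_i} <xi_i, c - zb>
   are nonnegative and add up to at most eps; padding them gives the eps_i.
   Proper separation from the origin in R^k is proved for convex cones by
   induction on the coordinates in which the cone can be nonzero, extending a
   functional found on a slice {x_i = 0} by one coordinate. *)

From HB Require Import structures.
From mathcomp Require Import all_boot all_order all_algebra.
From mathcomp Require Import classical_sets reals boolp.
From mathcomp Require Import ring lra.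
Import Order.TTheory GRing.Theory Num.Theory.
Set Implicit Arguments. Unset Strict Implicit. Unset Printing Implicit Defensive.
Local Open Scope ring_scope.
Local Open Scope classical_set_scope.

Section EpsNormalCap.
Variable R : realType.

Section Dotv.
Variable d : nat.
Implicit Types a b c x z w : 'rV[R]_d.

Lemma dotvC a b : dotv a b = dotv b a.
Proof. by apply: eq_bigr => i _; rewrite mulrC. Qed.

Lemma dotvDl a b c : dotv (a + b) c = dotv a c + dotv b c.
Proof. by rewrite /dotv -big_split; apply: eq_bigr => i _; rewrite mxE mulrDl. Qed.

Lemma dotvZl s a b : dotv (s *: a) b = s * dotv a b.
Proof. by rewrite /dotv mulr_sumr; apply: eq_bigr => i _; rewrite mxE mulrA. Qed.

Lemma dotvDr a b c : dotv a (b + c) = dotv a b + dotv a c.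
Proof. by rewrite !(dotvC a) dotvDl. Qed.

Lemma dotvZr s a b : dotv a (s *: b) = s * dotv a b.
Proof. by rewrite !(dotvC a) dotvZl. Qed.

Lemma dotvNl a b : dotv (- a) b = - dotv a b.
Proof. by rewrite -scaleN1r dotvZl mulN1r. Qed.

Lemma dotvNr a b : dotv a (- b) = - dotv a b.
Proof. by rewrite -scaleN1r dotvZr mulN1r. Qed.

Lemma dotvBl a b c : dotv (a - b) c = dotv a c - dotv b c.
Proof. by rewrite dotvDl dotvNl. Qed.

Lemma dotvBr a b c : dotv a (b - c) = dotv a b - dotv a c.
Proof. by rewrite dotvDr dotvNr. Qed.

Lemma dotv0l b : dotv 0 b = 0.
Proof. by rewrite -(scale0r (0 : 'rV_d)) dotvZl mul0r. Qed.

Lemma dotv0r a : dotv a 0 = 0.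
Proof. by rewrite dotvC dotv0l. Qed.

Lemma dotv_suml (I : Type) (r : seq I) (P : pred I) (F : I -> 'rV[R]_d) b :
  dotv (\sum_(i <- r | P i) F i) b = \sum_(i <- r | P i) dotv (F i) b.
Proof. by elim/big_rec2: _ => [|i u s _ <-]; rewrite ?dotv0l ?dotvDl. Qed.

Lemma dotv_delta i x : dotv (delta_mx 0 i) x = x 0 i.
Proof.
rewrite /dotv (bigD1 i) //= big1 => [|j /negbTE ji]; rewrite mxE ?ji ?eqxx.
  by rewrite mul1r addr0.
by rewrite mul0r.
Qed.

Lemma dotvv_ge0 a : 0 <= dotv a a.
Proof. by apply: sumr_ge0 => i _; rewrite -expr2 sqr_ge0. Qed.

Lemma dotvv_eq0 a : dotv a a = 0 -> a = 0.
Proof.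
move=> aa0; apply/rowP => j; rewrite mxE.
have /eqP : a 0 j * a 0 j = 0.
  by apply: (psumr_eq0P _ aa0) => // i _; rewrite -expr2 sqr_ge0.
by rewrite mulf_eq0 orbb => /eqP.
Qed.

Lemma dotv_ub_eq0 a C : (forall x, dotv a x <= C) -> a = 0.
Proof.
move=> aC; apply: dotvv_eq0; apply/eqP; rewrite eq_le dotvv_ge0 andbT leNgt.
apply/negP => aa_gt0; have := aC (((`|C| + 1) / dotv a a) *: a).
by rewrite dotvZr divfK ?gt_eqF //; have := ler_norm C; lra.
Qed.

Lemma sum_dotvB p (a c : 'I_p -> 'rV[R]_d) x :
  \sum_i dotv (a i) (c i - x) = \sum_i dotv (a i) (c i) - dotv (\sum_i a i) x.
Proof. by rewrite dotv_suml -sumrB; apply: eq_bigr => i _; rewrite dotvBr. Qed.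

Lemma dotv_le_dist a z w e : 0 < e -> sqdist z w < e ^+ 2 ->
  dotv a (z - w) <= (\sum_j `|a 0 j|) * e.
Proof.
move=> e_gt0 zw; rewrite /dotv mulr_suml; apply: ler_sum => j _.
have zwj : (z - w) 0 j * (z - w) 0 j < e * e.
  apply: le_lt_trans zw; rewrite -expr2 /sqdist /dotv (bigD1 j) //= lerDl.
  by apply: sumr_ge0 => i _; rewrite -expr2 sqr_ge0.
have zwj_le : `|(z - w) 0 j| <= e by rewrite ler_norml; apply/andP; split; nra.
by rewrite (le_trans (ler_norm _)) // normrM ler_wpM2l.
Qed.

Lemma eclosure_dotv_le (E : set 'rV[R]_d) a b B z :
  (forall w, E w -> dotv a (w - b) <= B) -> eclosure E z -> dotv a (z - b) <= B.
Proof.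
move=> EB Ez; rewrite leNgt; apply/negP => zB.
set M := \sum_j `|a 0 j|; set del := dotv a (z - b) - B.
have M_ge0 : 0 <= M by apply: sumr_ge0.
have e_gt0 : 0 < del / (M + 1) by rewrite divr_gt0 ?subr_gt0 // ltr_wpDl.
have [w [Ew zw]] := Ez _ e_gt0.
have Mdel : M * (del / (M + 1)) < del.
  by rewrite mulrA ltr_pdivrMr ?ltr_wpDl // /del; nra.
have zbE : dotv a (z - b) = dotv a (w - b) + dotv a (z - w).
  by rewrite -dotvDr [w - b + _]addrC addrA subrK.
have := dotv_le_dist a e_gt0 zw; rewrite -/M => zw_le.
have := EB _ Ew; rewrite /del in Mdel zw_le; nra.
Qed.

End Dotv.

Section Separation.
Variable d : nat.
Implicit Types (K G : set 'rV[R]_d) (c g x y : 'rV[R]_d).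

Definition conic K : Prop :=
  (forall x y, K x -> K y -> K (x + y)) /\
  (forall t x, 0 < t -> K x -> K (t *: x)).

Definition properly_separates c G : Prop :=
  (forall x, G x -> 0 <= dotv c x) /\ exists2 x, G x & 0 < dotv c x.

Definition slice K (i : 'I_d) : set 'rV[R]_d := [set x | K x /\ x 0 i = 0].

Lemma conic_slice K i : conic K -> conic (slice K i).
Proof.
move=> [KD KZ]; split=> [x y [Kx xi] [Ky yi] | t x t_gt0 [Kx xi]].
  by split; [exact: KD | rewrite mxE xi yi addr0].
by split; [exact: KZ | rewrite mxE xi mulr0].
Qed.

Lemma conic_extend K i g xp xn :
  conic K -> K xp -> 0 < xp 0 i -> K xn -> xn 0 i < 0 ->
  (forall x, slice K i x -> 0 <= dotv g x) ->
  exists r, forall x, K x -> 0 <= dotv g x + r * x 0 i.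
Proof.
move=> [KD KZ] Kxp xp_gt0 Kxn xn_lt0 g_ge0.
have ratio_le x y : K x -> K y -> 0 < x 0 i -> y 0 i < 0 ->
    - dotv g x / x 0 i <= dotv g y / - y 0 i.
  move=> Kx Ky x_gt0 y_lt0; have ny_gt0 : 0 < - y 0 i by rewrite oppr_gt0.
  have : 0 <= dotv g ((- y 0 i) *: x + x 0 i *: y).
    apply: g_ge0; split; first by apply: KD; apply: KZ.
    by rewrite !mxE; ring.
  rewrite dotvDr !dotvZr ler_pdivrMr // mulrAC ler_pdivlMr //; nra.
(* The new coefficient must lie above U and below the ratios bounding U in [U_ub]. *)
pose U := [set - dotv g x / x 0 i | x in [set x | K x /\ 0 < x 0 i]].
have U_ub y : K y -> y 0 i < 0 -> ubound U (dotv g y / - y 0 i).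
  by move=> Ky y_lt0 _ [x [Kx x_gt0] <-]; exact: ratio_le.
have U_sup : has_sup U.
  split; first by exists (- dotv g xp / xp 0 i), xp.
  by exists (dotv g xn / - xn 0 i); exact: U_ub.
exists (sup U) => x Kx; case: (ltgtP (x 0 i) 0) => [x_lt0|x_gt0|x0].
- have : sup U <= dotv g x / - x 0 i by apply: ge_sup; [case: U_sup | exact: U_ub].
  by rewrite ler_pdivlMr ?oppr_gt0 //; nra.
- have : - dotv g x / x 0 i <= sup U by apply: sup_upper_bound => //; exists x.
  by rewrite ler_pdivrMr //; nra.
- by rewrite x0 mulr0 addr0; apply: g_ge0.
Qed.

Lemma conic_separation_step K i g :
  conic K -> (exists x, K x) ->
  (forall x, slice K i x -> 0 <= dotv g x) ->
  ((exists x, slice K i x) -> exists2 x, slice K i x & 0 < dotv g x) ->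
  exists c, properly_separates c K.
Proof.
move=> Kc [x0 Kx0] g_ge0 g_gt0.
have [[[xp [Kxp xp_gt0]] [xn [Kxn xn_lt0]]] | one_sided] :=
  pselect ((exists x, K x /\ 0 < x 0 i) /\ (exists x, K x /\ x 0 i < 0)).
  have [r r_ge0] := conic_extend Kc Kxp xp_gt0 Kxn xn_lt0 g_ge0.
  have dotvE x : dotv (g + r *: delta_mx 0 i) x = dotv g x + r * x 0 i.
    by rewrite dotvDl dotvZl dotv_delta.
  exists (g + r *: delta_mx 0 i); split=> [x Kx|]; first by rewrite dotvE r_ge0.
  have [|x [Kx xi] gx_gt0] := g_gt0.
    exists ((- xn 0 i) *: xp + xp 0 i *: xn); split.
      by case: Kc => KD KZ; apply: KD; apply: KZ; rewrite ?oppr_gt0.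
    by rewrite !mxE; ring.
  by exists x => //; rewrite dotvE xi mulr0 addr0.
have [s [s_neq0 s_ge0]] : exists s : R, s != 0 /\ forall x, K x -> 0 <= s * x 0 i.
  case: (pselect (exists x, K x /\ x 0 i < 0)) => [neg|nneg].
    exists (-1); split=> [|x Kx]; first by rewrite oppr_eq0 oner_neq0.
    rewrite mulN1r oppr_ge0 leNgt; apply/negP => x_gt0.
    by apply: one_sided; split => //; exists x.
  exists 1; split=> [|x Kx]; first exact: oner_neq0.
  by rewrite mul1r leNgt; apply/negP => x_lt0; apply: nneg; exists x.
have dotvE x : dotv (s *: delta_mx 0 i) x = s * x 0 i by rewrite dotvZl dotv_delta.
have [[x [Kx sx_gt0]] | flat] := pselect (exists x, K x /\ 0 < s * x 0 i).
  exists (s *: delta_mx 0 i); split=> [y Ky|]; first by rewrite dotvE s_ge0.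
  by exists x; rewrite ?dotvE.
have Kslice x : K x -> slice K i x.
  move=> Kx; split => //; have : s * x 0 i = 0.
    apply/le_anti; rewrite s_ge0 // andbT leNgt; apply/negP => sx.
    by apply: flat; exists x.
  by move/eqP; rewrite mulf_eq0 (negbTE s_neq0) => /eqP.
have [|x [Kx _] gx_gt0] := g_gt0; first by exists x0; exact: Kslice.
by exists g; split=> [y Ky|]; [apply: g_ge0; exact: Kslice | exists x].
Qed.

Lemma conic_separation K x0 :
  conic K -> K x0 -> ~ K 0 -> exists c, properly_separates c K.
Proof.
suff sep_supp (S : {set 'I_d}) K' : conic K' -> (exists x, K' x) -> ~ K' 0 ->
    (forall x, K' x -> forall i, i \notin S -> x 0 i = 0) ->
    exists c, properly_separates c K'.
  move=> Kc Kx0 nK0; apply: (sep_supp [set: 'I_d]%SET) => // [|x _ i].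
    by exists x0.
  by rewrite inE.
elim: {S}#|S| {-2}S (erefl #|S|) K' => [|n IH] S cardS K' Kc [y Ky] nK0 supp.
  have y0 : y = 0 by apply/rowP => i; rewrite mxE supp // (cards0_eq cardS) inE.
  by case: nK0; rewrite -y0.
have [i Si] : exists i, i \in S by apply/card_gt0P; rewrite cardS.
have cardSi : #|S :\ i| = n by move: (cardsD1 i S); rewrite Si cardS add1n => -[].
have [g g_ge0 g_gt0] : exists2 g, (forall x, slice K' i x -> 0 <= dotv g x) &
    ((exists x, slice K' i x) -> exists2 x, slice K' i x & 0 < dotv g x).
  have [Ki_ne | Ki_empty] := pselect (exists x, slice K' i x); last first.
    by exists 0 => [x _|/Ki_empty//]; rewrite dotv0l.
  have [||g [g_ge0 g_gt0]] := IH (S :\ i) cardSi (slice K' i) (conic_slice i Kc) Ki_ne.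
  - by move=> [/nK0].
  - move=> x [Kx xi] j; rewrite in_setD1 negb_and negbK => /orP[/eqP -> // | ].
    exact: supp.
  by exists g.
by apply: (conic_separation_step Kc _ g_ge0 g_gt0); exists y.
Qed.

Lemma convex_separation G x0 :
  convex_set G -> G x0 -> ~ G 0 -> exists c, properly_separates c G.
Proof.
move=> Gc Gx0 nG0.
pose K := [set y | exists2 s, 0 < s & exists2 x, G x & y = s *: x].
have Kc : conic K.
  split=> [_ _ [s s_gt0 [x Gx ->]] [s' s'_gt0 [x' Gx' ->]] |
           t _ t_gt0 [s s_gt0 [x Gx ->]]].
    have ss'_gt0 : 0 < s + s' by rewrite addr_gt0.
    exists (s + s') => //; exists (s / (s + s') *: x + (1 - s / (s + s')) *: x').
      apply: Gc => //; first by rewrite divr_ge0 ?ltW.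
      by rewrite ler_pdivrMr // mul1r lerDl ltW.
    rewrite scalerDr !scalerA mulrBr mulr1 mulrCA divff ?gt_eqF // mulr1.
    by rewrite [s + s' - s]addrC addKr.
  by exists (t * s); [rewrite mulr_gt0 | exists x; rewrite ?scalerA].
have [||c [c_ge0 [_ [s s_gt0 [x Gx ->]]]]] := @conic_separation K x0 Kc.
- by exists 1 => //; exists x0; rewrite ?scale1r.
- move=> [s s_gt0 [x Gx /esym/eqP]]; rewrite scaler_eq0 gt_eqF //= => /eqP x_eq0.
  by apply: nG0; rewrite -x_eq0.
rewrite dotvZr pmulr_rgt0 // => cx_gt0.
exists c; split; last by exists x.
move=> y Gy; have := c_ge0 (1 *: y); rewrite dotvZr mul1r; apply.
by exists 1 => //; exists y.
Qed.

End Separation.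

Lemma affine_ge0_on_ray (a b A : R) :
  (forall t, t < A -> 0 <= a + b * t) -> b <= 0 /\ 0 <= a + b * A.
Proof.
move=> ab_ge0; have b_le0 : b <= 0.
  rewrite leNgt; apply/negP => b_gt0.
  pose t := - (`|a| + 1) / b - `|A| - 1.
  have t_lt : t < A.
    have : - (`|a| + 1) / b < 0 by rewrite mulNr oppr_lt0 divr_gt0 ?ltr_wpDl.
    have : - A <= `|A| by rewrite -normrN ler_norm.
    rewrite /t; lra.
  have bt : b * t = - (`|a| + 1) - b * (`|A| + 1) by rewrite /t; field; rewrite gt_eqF.
  have := ab_ge0 t t_lt; rewrite bt.
  have := ler_norm a; have : 0 < b * (`|A| + 1) by rewrite mulr_gt0 ?ltr_wpDl.
  lra.
split=> //; rewrite leNgt; apply/negP => abA_lt0.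
pose t := A + (a + b * A) / (2 * (1 - b)).
have b1_gt0 : 0 < 1 - b by lra.
have t_lt : t < A.
  have : (a + b * A) / (2 * (1 - b)) < 0 by rewrite pmulr_llt0 ?invr_gt0 ?mulr_gt0.
  rewrite /t; lra.
have := ab_ge0 t t_lt.
have -> : a + b * t = (a + b * A) * ((2 - b) / (2 * (1 - b))).
  by rewrite /t; field; rewrite gt_eqF.
have : 0 < (2 - b) / (2 * (1 - b)) by rewrite divr_gt0 ?mulr_gt0; lra.
nra.
Qed.

Lemma sum_le_split (T : Type) (I : finType) (E : I -> set T) (f : I -> T -> R) B :
  (forall i, exists w, E i w) ->
  (forall c : I -> T, (forall i, E i (c i)) -> \sum_i f i (c i) <= B) ->
  exists s : I -> R, (forall i w, E i w -> f i w <= s i) /\ \sum_i s i <= B.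
Proof.
move=> /choice[w0 Ew0] fB.
pose S i := f i @` E i.
have S_sup i : has_sup (S i).
  split; first by exists (f i (w0 i)), (w0 i).
  exists (B - \sum_(j | j != i) f j (w0 j)) => _ [w Ew <-].
  pose c j := if j == i then w else w0 j.
  have := fB c; rewrite (bigD1 i) //= /c eqxx.
  under eq_bigr => j /negbTE -> do [].
  by rewrite lerBrDr addrC; apply => j; case: eqP => // ->.
exists (fun i => sup (S i)); split=> [i w Ew|].
  by apply: sup_upper_bound => //; exists w.
rewrite leNgt; apply/negP => sB.
set del := \sum_i sup (S i) - B; set q := del / (#|I|%:R + 1).
have q_gt0 : 0 < q by rewrite divr_gt0 ?subr_gt0 ?ltr_wpDl.
have /choice[c Ec] i : exists w, E i w /\ sup (S i) - q < f i w.
  by have [_ [w Ew <-] ?] := sup_adherent q_gt0 (S_sup i); exists w.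
have : \sum_i (sup (S i) - q) <= \sum_i f i (c i).
  by apply: ler_sum => i _; exact/ltW/(Ec i).2.
have -> : \sum_i (sup (S i) - q) = \sum_i sup (S i) - q * #|I|%:R.
  by rewrite sumrB sumr_const mulr_natr.
have : q * #|I|%:R < del by rewrite /q mulrAC ltr_pdivrMr ?ltr_wpDl // /del; nra.
have := fB c (fun i => (Ec i).1); rewrite /del; lra.
Qed.

Lemma sum_le_pad (I : finType) (i0 : I) (s : I -> R) B :
  (forall i, 0 <= s i) -> \sum_i s i <= B ->
  exists e : I -> R, (forall i, 0 <= e i /\ s i <= e i) /\ \sum_i e i = B.
Proof.
move=> s_ge0 sB; pose pad i := if i == i0 then B - \sum_j s j else 0.
have pad_ge0 i : 0 <= pad i by rewrite /pad; case: eqP; rewrite ?subr_ge0.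
exists (fun i => s i + pad i); split=> [i|].
  by split; [rewrite addr_ge0 | rewrite lerDl].
have -> : \sum_i (s i + pad i) = \sum_i s i + pad i0.
  rewrite big_split /=; congr (_ + _).
  by rewrite (bigD1 i0) //= big1 ?addr0 // => i /negbTE ni; rewrite /pad ni.
by rewrite /pad eqxx addrC subrK.
Qed.

Section Relint.
Variable d : nat.
Implicit Types (D E : set 'rV[R]_d) (a w z : 'rV[R]_d).

Lemma eclosure_nonempty D E z : D `<=` eclosure E -> D z -> exists w, E w.
Proof. by move=> DE /DE /(_ 1 ltr01) [w [Ew _]]; exists w. Qed.

Lemma aff_line D a w t : D a -> D w -> aff D (t *: a + (1 - t) *: w).
Proof.
move=> Da Dw; exists 2%N, (fun k => if k == ord0 then a else w),
  (fun k => if k == ord0 then t else 1 - t).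
split; first by move=> k; case: ifP.
by rewrite !big_ord_recl !big_ord0 /= !addr0; split; [rewrite addrC subrK|].
Qed.

Lemma ri_dotv_ge0_eq0 D z a :
  ri D z -> (forall w, D w -> 0 <= dotv a (w - z)) ->
  forall w, D w -> dotv a (w - z) = 0.
Proof.
move=> [Dz [del [del_gt0 ball]]] a_ge0 w Dw; apply/le_anti; rewrite a_ge0 // andbT.
have q_ge0 : 0 <= sqdist w z := dotvv_ge0 _.
have del2_gt0 : 0 < del ^+ 2 by rewrite exprn_gt0.
pose s := del ^+ 2 / (sqdist w z + del ^+ 2 + 1).
have s_gt0 : 0 < s by rewrite divr_gt0 //; lra.
have s_le1 : s <= 1 by rewrite ler_pdivrMr ?mul1r; lra.
have sq_lt : s * sqdist w z < del ^+ 2 by rewrite /s mulrAC ltr_pdivrMr; nra.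
clearbody s.
(* Reflecting w slightly through z stays in D. *)
have reflE : (1 + s) *: z + (1 - (1 + s)) *: w - z = - s *: (w - z).
  by apply/rowP => j; rewrite !mxE; ring.
have Dr : D ((1 + s) *: z + (1 - (1 + s)) *: w).
  apply: ball (aff_line _ Dz Dw).
  by rewrite /sqdist reflE dotvZl dotvZr -/(sqdist w z); nra.
by have := a_ge0 _ Dr; rewrite reflE dotvZr; nra.
Qed.

End Relint.

Lemma row_mx_sum (V : nmodType) (I : Type) (r : seq I) (P : pred I) k n1 n2
    (A : I -> 'M[V]_(k, n1)) (B : I -> 'M[V]_(k, n2)) :
  row_mx (\sum_(i <- r | P i) A i) (\sum_(i <- r | P i) B i) =
  \sum_(i <- r | P i) row_mx (A i) (B i).
Proof. by elim/big_rec3: _ => [|i x y z _ <-]; rewrite ?row_mx0 ?add_row_mx. Qed.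

Section Stack.
Variables p d : nat.
Implicit Types (a c : 'I_p -> 'rV[R]_d) (s t : R).

Definition stack c t : 'rV[R]_(p * d + 1) := row_mx (mxvec (\matrix_i c i)) t%:M.

Lemma stackD c c' t t' :
  stack c t + stack c' t' = stack (fun i => c i + c' i) (t + t').
Proof.
rewrite /stack add_row_mx raddfD -linearD /=; congr (row_mx (mxvec _) _).
by apply/matrixP => i j; rewrite !mxE.
Qed.

Lemma stackZ s c t : s *: stack c t = stack (fun i => s *: c i) (s * t).
Proof.
rewrite /stack scale_row_mx scale_scalar_mx -linearZ /=; congr (row_mx (mxvec _) _).
by apply/matrixP => i j; rewrite !mxE.
Qed.

Lemma stack_eq0 c t : stack c t = 0 -> (forall i, c i = 0) /\ t = 0.
Proof.
move/eqP; rewrite row_mx_eq0 mxvec_eq0 => /andP[/eqP c0 /eqP t0]; split.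
  by move=> i; rewrite -(rowK c i) c0 row0.
by move/matrixP: t0 => /(_ 0 0); rewrite !mxE.
Qed.

Lemma dotv_stack a s c t :
  dotv (stack a s) (stack c t) = \sum_i dotv (a i) (c i) + s * t.
Proof.
rewrite /dotv big_split_ord /= big_ord1 !row_mxEr !mxE /= !mulr1n; congr (_ + _).
under eq_bigr do rewrite !row_mxEl.
rewrite (reindex _ (curry_mxvec_bij p d)) pair_bigA /=.
by apply: eq_bigr => -[i j] _; rewrite /= !mxvecE !mxE.
Qed.

Lemma stackE (k : 'rV[R]_(p * d + 1)) :
  k = stack (fun i => row i (vec_mx (lsubmx k))) (rsubmx k 0 0).
Proof.
rewrite /stack -mx11_scalar.
have -> : \matrix_i row i (vec_mx (lsubmx k)) = vec_mx (lsubmx k).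
  by apply/matrixP => i j; rewrite !mxE.
by rewrite vec_mxK hsubmxK.
Qed.

End Stack.

Section NormalCap.
Variables p d : nat.
Implicit Types (D E : 'I_p -> set 'rV[R]_d) (c : 'I_p -> 'rV[R]_d).

Lemma cap_separation E xi beta :
  (forall i, convex_set (E i)) -> (forall i, exists w, E i w) ->
  (forall x, (forall i, E i x) -> dotv xi x <= beta) ->
  exists (eta : 'I_p -> 'rV[R]_d) (lam : R),
    (forall c x t, (forall i, E i (c i)) -> t < dotv xi x - beta ->
       0 <= \sum_i dotv (eta i) (c i - x) + lam * t) /\
    exists c x t, [/\ forall i, E i (c i), t < dotv xi x - beta &
       0 < \sum_i dotv (eta i) (c i - x) + lam * t].
Proof.
move=> Ec /choice[w0 Ew0] xi_le.
pose G := [set y | exists c x t, [/\ forall i, E i (c i), t < dotv xi x - beta &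
  y = stack (fun i => c i - x) t]].
have Gc : convex_set G.
  move=> _ _ a [c [x [t [Ec1 t_lt ->]]]] [c' [x' [t' [Ec1' t_lt' ->]]]] a_ge0 a_le1.
  exists (fun i => a *: c i + (1 - a) *: c' i), (a *: x + (1 - a) *: x').
  exists (a * t + (1 - a) * t'); split; first by move=> i; apply: (Ec i).
    rewrite dotvDr !dotvZr.
    have : (1 - a) * t' <= (1 - a) * (dotv xi x' - beta).
      by apply: ler_wpM2l; [rewrite subr_ge0 | exact: ltW].
    move: a_ge0; rewrite le_eqVlt => /orP[/eqP <-|a_gt0]; first lra.
    have : a * t < a * (dotv xi x - beta) by rewrite ltr_pM2l.
    lra.
  rewrite !stackZ stackD; congr stack; apply/funext => i.
  by rewrite !scalerBr opprD addrACA.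
have G0 : ~ G 0.
  move=> [c [x [t [Ec1 t_lt /esym/stack_eq0[cx t0]]]]].
  have Ex i : E i x by move/eqP: (cx i) (Ec1 i); rewrite subr_eq0 => /eqP ->.
  by have := xi_le x Ex; lra.
have Gw0 : G (stack (fun i => w0 i - 0) (- beta - 1)).
  by exists w0, 0, (- beta - 1); split => //; rewrite dotv0r; lra.
have [k [k_ge0 [_ [c [x [t [Ec1 t_lt ->]]]] k_gt0]]] := convex_separation Gc Gw0 G0.
have kE c' x' t' : dotv k (stack (fun i => c' i - x') t') =
    \sum_i dotv (row i (vec_mx (lsubmx k))) (c' i - x') + rsubmx k 0 0 * t'.
  by rewrite {1}[k]stackE dotv_stack.
exists (fun i => row i (vec_mx (lsubmx k))), (rsubmx k 0 0); split.
  by move=> c' x' t' Ec' t_lt'; rewrite -kE; apply: k_ge0; exists c', x', t'.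
by exists c, x, t; rewrite -kE.
Qed.

Lemma ri_sum_dotv_ge0_eq0 D E z0 (eta : 'I_p -> 'rV[R]_d) :
  (forall i, E i `<=` D i) -> (forall i, D i `<=` eclosure (E i)) ->
  (forall i, ri (D i) z0) ->
  (forall c x, (forall i, E i (c i)) -> 0 <= \sum_i dotv (eta i) (c i - x)) ->
  forall c x, (forall i, E i (c i)) -> \sum_i dotv (eta i) (c i - x) = 0.
Proof.
move=> ED DE riz0 eta_ge0.
have /choice[w0 Ew0] i : exists w, E i w by apply: eclosure_nonempty (riz0 i).1.
have eta_sum0 : \sum_i eta i = 0.
  apply: (@dotv_ub_eq0 _ _ (\sum_i dotv (eta i) (w0 i))) => x.
  by have := eta_ge0 w0 x Ew0; rewrite sum_dotvB; lra.
have shiftE c x : \sum_i dotv (eta i) (c i - x) = \sum_i dotv (eta i) (c i - z0).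
  by rewrite !sum_dotvB eta_sum0 !dotv0l.
have [|s [s_ub s_le0]] := sum_le_split (f := fun i w => - dotv (eta i) (w - z0)) (B := 0)
    (fun i => ex_intro _ _ (Ew0 i)).
  by move=> c Ec; rewrite sumrN oppr_le0; exact: eta_ge0.
have s_ub_D i w : D i w -> - dotv (eta i) (w - z0) <= s i.
  move=> Dw; rewrite -dotvNl; apply: (eclosure_dotv_le _ (DE i _ Dw)) => v Ev.
  by rewrite dotvNl; exact: s_ub.
have s_ge0 i : 0 <= s i by have := s_ub_D i z0 (riz0 i).1; rewrite subrr dotv0r oppr0.
have eta0 i w : D i w -> dotv (eta i) (w - z0) = 0.
  apply: (ri_dotv_ge0_eq0 (riz0 i)) => v Dv; rewrite -oppr_le0.
  apply: le_trans (s_ub_D i v Dv) _; apply: le_trans s_le0.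
  by rewrite (bigD1 i) //= lerDl sumr_ge0.
by move=> c x Ec; rewrite shiftE big1 // => i _; apply: eta0; exact: ED.
Qed.

Lemma cap_halfspace_split D E z0 xi beta :
  (forall i, convex_set (E i)) -> (forall i, E i `<=` D i) ->
  (forall i, D i `<=` eclosure (E i)) -> (forall i, ri (D i) z0) ->
  (forall x, (forall i, D i x) -> dotv xi x <= beta) ->
  exists xs : 'I_p -> 'rV[R]_d, \sum_i xs i = xi /\
    forall c, (forall i, E i (c i)) -> \sum_i dotv (xs i) (c i) <= beta.
Proof.
move=> Ec ED DE riz0 xi_le.
have Ene i : exists w, E i w by apply: eclosure_nonempty (riz0 i).1.
have [w0 Ew0] := choice Ene.
have [eta [lam [sep [c0 [x0 [t0 [Ec0 t0_lt sep_gt0]]]]]]] :=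
  cap_separation Ec Ene (fun x Ex => xi_le x (fun i => ED i _ (Ex i))).
have ray c x : (forall i, E i (c i)) ->
    lam <= 0 /\ 0 <= \sum_i dotv (eta i) (c i - x) + lam * (dotv xi x - beta).
  by move=> Ec1; apply: affine_ge0_on_ray => t; exact: sep.
(* This is where the relative-interior qualification is used. *)
have lam_neq0 : lam != 0.
  apply/eqP => lam0; move: sep_gt0; rewrite lam0 mul0r addr0.
  rewrite (ri_sum_dotv_ge0_eq0 ED DE riz0 _ x0 Ec0) ?ltxx // => c x Ec1.
  by have [_] := ray c x Ec1; rewrite lam0 mul0r addr0.
have lam_lt0 : lam < 0 by rewrite lt_neqAle lam_neq0 (ray c0 x0 Ec0).1.
have eta_sum : \sum_i eta i = lam *: xi.
  apply/eqP; rewrite -subr_eq0; apply/eqP.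
  apply: (@dotv_ub_eq0 _ _ (\sum_i dotv (eta i) (w0 i) - lam * beta)) => x.
  by have := (ray w0 x Ew0).2; rewrite sum_dotvB dotvBl dotvZl; lra.
exists (fun i => lam^-1 *: eta i); split.
  by rewrite -scaler_sumr eta_sum scalerA mulVf ?scale1r.
move=> c Ec1; have := (ray c 0 Ec1).2; rewrite dotv0r sub0r.
under eq_bigr do rewrite subr0.
rewrite (eq_bigr _ (fun i _ => dotvZl _ _ _)) -mulr_sumr.
set S := \sum_i _ => S_ge.
have : lam^-1 * S - beta = lam^-1 * (S + lam * - beta) by field.
have : lam^-1 < 0 by rewrite invr_lt0.
nra.
Qed.

Lemma eps_normal_bigcap (i0 : 'I_p) D eps zb xi :
  (forall i, nearly_convex (D i)) -> (exists z, forall i, ri (D i) z) ->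
  (forall i, D i zb) -> eps_normal eps zb (\bigcap_i D i) xi ->
  exists e : 'I_p -> R, (forall i, 0 <= e i) /\ \sum_i e i = eps /\
    exists xs : 'I_p -> 'rV[R]_d, \sum_i xs i = xi /\
      forall i, eps_normal (e i) zb (D i) (xs i).
Proof.
move=> /choice[E hE] [z0 riz0] Dzb xi_normal.
have Ec i := (hE i).1; have ED i := (hE i).2.1; have DE i := (hE i).2.2.
have [|xs [xs_sum xs_le]] :=
  @cap_halfspace_split D E z0 xi (eps + dotv xi zb) Ec ED DE riz0.
  by move=> x Dx; have := xi_normal x (fun i _ => Dx i); rewrite dotvBr; lra.
have [|s [s_ub s_le]] := sum_le_split (f := fun i w => dotv (xs i) (w - zb)) (B := eps)
    (fun i => eclosure_nonempty (DE i) (Dzb i)).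
  by move=> c Ec1; rewrite sum_dotvB xs_sum; have := xs_le c Ec1; lra.
have s_ub_D i w : D i w -> dotv (xs i) (w - zb) <= s i.
  by move=> Dw; apply: (eclosure_dotv_le (s_ub i) (DE i _ Dw)).
have s_ge0 i : 0 <= s i by have := s_ub_D i zb (Dzb i); rewrite subrr dotv0r.
have [e [e_ge e_sum]] := sum_le_pad i0 s_ge0 s_le.
exists e; split=> [i|]; first exact: (e_ge i).1.
split=> //; exists xs; split=> // i w Dw.
exact: le_trans (s_ub_D i w Dw) (e_ge i).2.
Qed.

End NormalCap.

Lemma eps_normal_sum (I : finType) d (D : I -> set 'rV[R]_d) e xs zb :
  (forall i, eps_normal (e i) zb (D i) (xs i)) ->
  eps_normal (\sum_i e i) zb (\bigcap_i D i) (\sum_i xs i).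
Proof.
move=> xs_normal z Dz; rewrite dotv_suml; apply: ler_sum => i _.
exact: xs_normal i z (Dz i Logic.I).
Qed.

Lemma gph_map_cap p n m (F : 'I_p -> 'rV[R]_n -> set 'rV[R]_m) :
  gph (map_cap F) = \bigcap_i gph (F i).
Proof. by apply/seteqP; split=> z Fz i => [_|]; [exact: Fz | exact: Fz i I]. Qed.

End EpsNormalCap.

Theorem mainTheorem7 (R : realType) (n m p : nat)
  (F : 'I_p -> 'rV[R]_n -> set 'rV[R]_m)
  (hp : (0 < p)%N)
  (hconv : forall i, nearly_convex_map (F i))
  (hri : exists z, forall i, ri (gph (F i)) z)
  (eps : R) (heps : 0 <= eps)
  (xb : 'rV[R]_n) (yb : 'rV[R]_m) (hgph : gph (map_cap F) (row_mx xb yb))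
  (v : 'rV[R]_m) :
  eps_coderiv eps (map_cap F) xb yb v =
  [set u | exists e : 'I_p -> R,
      (forall i, 0 <= e i) /\ \sum_(i < p) e i = eps /\
      exists vs : 'I_p -> 'rV[R]_m, \sum_(i < p) vs i = v /\
      exists us : 'I_p -> 'rV[R]_n,
        (forall i, eps_coderiv (e i) (F i) xb yb (vs i) (us i)) /\
        u = \sum_(i < p) us i].
Proof.
rewrite /eps_coderiv gph_map_cap; apply/seteqP; split=> u /=.
- move=> u_normal.
  have [e [e_ge0 [e_sum [xs [xs_sum xs_normal]]]]] :=
    eps_normal_bigcap (Ordinal hp) hconv hri hgph u_normal.
  exists e; split=> //; split=> //.
  exists (fun i => - rsubmx (xs i)); split.
    by rewrite sumrN -linear_sum /= xs_sum row_mxKr opprK.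
  exists (fun i => lsubmx (xs i)); split.
    by move=> i; rewrite opprK hsubmxK; exact: xs_normal.
  by rewrite -linear_sum /= xs_sum row_mxKl.
- move=> [e [_ [<- [vs [<- [us [us_normal ->]]]]]]].
  by rewrite -sumrN row_mx_sum; apply: eps_normal_sum.
Qed.
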